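(* Let $\tilde{\mathcal D}$ be a finite set of examples, let $\mathrm{sim}:\tilde{\mathcal D}\times\tilde{\mathcal D}\to\mathbb{R}$, let $C:\tilde{\mathcal D}\to[0,\infty)$, let $\tau\ge 0$, and let $\sigma:[0,\infty)\to\mathbb{R}$ be non-decreasing and concave with $\sigma(0)=0$. For $\mathcal S\subseteq\tilde{\mathcal D}$ define $$OBJ(\mathcal S)=\sum_{x_i\in\tilde{\mathcal D}}\sigma\Big(\sum_{x_j\in\mathcal S}\mathbb 1_{[\mathrm{sim}(x_i,x_j)\ge\tau]}\,\mathrm{sim}(x_i,x_j)\,C(x_j)\Big).$$ Let $s\ge 1$, let $\mathcal S^*\in\arg\max_{\mathcal S\subseteq\tilde{\mathcal D},\,|\mathcal S|\le s}OBJ(\mathcal S)$, and let $\mathcal S$ be the greedy solution of size $s$, obtained by starting from $\emptyset$ and repeatedly adding an element $x\in\tilde{\mathcal D}\setminus\mathcal S$ maximizing $OBJ(\mathcal S\cup\{x\})-OBJ(\mathcal S)$ until $|\mathcal S|=s$. Then $$OBJ(\mathcal S)\ge(1-1/e)\cdot OBJ(\mathcal S^* ).$$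
   Context: In the paper, $\mathrm{sim}$ is the cosine similarity between embeddings of augmentations of two examples, $C$ is a prediction confidence (e.g. maximum softmax probability), $\tau$ is a neighborhood threshold and $\sigma$ is a utility function (e.g. the positive part of $\tanh$); $OBJ$ is the total reduced neighborhood confidence objective for data pruning. *)

From HB Require Import structures.
From mathcomp Require Import all_boot all_order all_algebra.
From mathcomp Require Import all_classical all_reals all_analysis.
Set Implicit Arguments. Unset Strict Implicit. Unset Printing Implicit Defensive.
Import Order.TTheory GRing.Theory Num.Theory.
Local Open Scope ring_scope.

Section Defs.
Variables (R : realType) (T : finType).

Definition OBJ (sim : T -> T -> R) (C : T -> R) (tau : R) (sigma : R -> R)
  (S : {set T}) : R :=
  \sum_(i : T) sigma (\sum_(j in S)
      (if tau <= sim i j then 1 else 0) * sim i j * C j).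

Definition nondecr_nonneg (sigma : R -> R) : Prop :=
  forall x y : R, 0 <= x -> x <= y -> sigma x <= sigma y.

Definition concave_nonneg (sigma : R -> R) : Prop :=
  forall x y t : R, 0 <= x -> 0 <= y -> 0 <= t -> t <= 1 ->
    t * sigma x + (1 - t) * sigma y <= sigma (t * x + (1 - t) * y).

Definition greedy_step (F : {set T} -> R) (S : {set T}) (x : T) : Prop :=
  x \notin S /\
  forall y, y \notin S -> F (y |: S) - F S <= F (x |: S) - F S.

Fixpoint greedy_from (F : {set T} -> R) (S : {set T}) (xs : seq T) : Prop :=
  match xs with
  | [::] => True
  | x :: xs' => greedy_step F S x /\ greedy_from F (x |: S) xs'
  end.

End Defs.

From HB Require Import structures.
From mathcomp Require Import all_boot all_order all_algebra.
From mathcomp Require Import all_classical all_reals all_analysis.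
From mathcomp Require Import ring lra.
Import Order.TTheory GRing.Theory Num.Theory.
Local Open Scope ring_scope.

(* OBJ is a concave function of a nonnegative modular function, summed over
   the examples; such a sum is monotone and submodular because a concave
   sigma has nonincreasing increments.  For a monotone submodular F, the
   greedy gain at each step is at least a 1/s fraction of the remaining gap
   F S* - F S, so after s steps the gap has shrunk by (1 - 1/s)^s <= 1/e. *)

Lemma concave_increment_nonincr (R : realType) (sigma : R -> R) (a b d : R) :
  concave_nonneg sigma -> 0 <= a -> a <= b -> 0 <= d ->
  sigma (b + d) - sigma b <= sigma (a + d) - sigma a.
Proof.
move=> sigma_conc a_ge0 le_ab d_ge0.
have [len0|len_neq0] := eqVneq (b + d - a) 0.
  by have -> : b = a by lra; have -> : d = 0 by lra.
have len_gt0 : 0 < b + d - a by rewrite lt0r len_neq0 /=; lra.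
(* both b and a + d are convex combinations of the endpoints a and b + d *)
set t := (b - a) / (b + d - a).
have t_ge0 : 0 <= t by rewrite divr_ge0 //; lra.
have t_le1 : t <= 1 by rewrite ler_pdivrMr // mul1r; lra.
have bd_ge0 : 0 <= b + d by lra.
have conv_ad : t * a + (1 - t) * (b + d) = a + d by rewrite /t; field.
have conv_b : (1 - t) * a + (1 - (1 - t)) * (b + d) = b by rewrite /t; field.
have := sigma_conc a (b + d) t a_ge0 bd_ge0 t_ge0 t_le1.
have := sigma_conc a (b + d) (1 - t) a_ge0 bd_ge0 ltac:(lra) ltac:(lra).
rewrite conv_ad conv_b !mulrBl !mul1r; lra.
Qed.

Lemma one_subVn_expn_le_expRN1 (R : realType) (n : nat) : (0 < n)%N ->
  (1 - n%:R^-1) ^+ n <= expR (-1) :> R.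
Proof.
move=> n_gt0.
have n_pos : 0 < n%:R :> R by rewrite ltr0n.
have base_ge0 : 0 <= 1 - n%:R^-1 :> R.
  by rewrite subr_ge0 invf_le1 // ler1n.
have base_le : 1 - n%:R^-1 <= expR (- n%:R^-1) :> R.
  by have := expR_ge1Dx (- n%:R^-1 : R); lra.
apply: (le_trans (lerXn2r n _ _ base_le)); rewrite ?nnegrE ?expR_ge0 //.
by rewrite -expRM_natl mulrN divff ?gt_eqF.
Qed.

Section MonotoneSubmodular.
Context {R : realType} {T : finType}.
Variable F : {set T} -> R.
Hypothesis F_mono : forall A B : {set T}, A \subset B -> F A <= F B.
Hypothesis F_submod : forall (A B : {set T}) x, A \subset B -> x \notin B ->
  F (x |: B) - F B <= F (x |: A) - F A.

Lemma gain_ge0 (A : {set T}) y : 0 <= F (y |: A) - F A.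
Proof. by rewrite subr_ge0; apply: F_mono; exact: finset.subsetUr. Qed.

Lemma gain_mem (A : {set T}) y : y \in A -> F (y |: A) - F A = 0.
Proof.
move=> yA; have /finset.setUidPr-> : [set y] \subset A by rewrite finset.sub1set.
exact: subrr.
Qed.

Lemma gainS (A B : {set T}) y : A \subset B ->
  F (y |: B) - F B <= F (y |: A) - F A.
Proof.
move=> AB; have [yB|/F_submod-> //] := boolP (y \in B).
by rewrite gain_mem ?gain_ge0.
Qed.

Lemma setU_gain_le_sum (A : {set T}) (l : seq T) :
  F (A :|: [set y in l]) - F A <= \sum_(y <- l) (F (y |: A) - F A).
Proof.
elim: l => [|y l IH].
  by rewrite big_nil (finset.setUidPl _) ?subrr // finset.sub0set.
have -> : A :|: [set z in y :: l] = y |: (A :|: [set z in l]).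
  by apply/setP => z; rewrite !inE orbCA.
have := @gainS _ _ y (finset.subsetUl A [set z in l]).
rewrite big_cons; lra.
Qed.

Lemma greedy_step_gain (Sstar S : {set T}) (s : nat) x :
  (#|Sstar| <= s)%N -> greedy_step F S x ->
  F Sstar - F S <= s%:R * (F (x |: S) - F S).
Proof.
move=> card_Sstar [_ x_best].
have F_Sstar : F Sstar <= F (S :|: [set y in enum Sstar]).
  by rewrite set_enum F_mono ?finset.subsetUr.
have sum_le : \sum_(y <- enum Sstar) (F (y |: S) - F S) <=
    s%:R * (F (x |: S) - F S).
  rewrite big_enum /= (@le_trans _ _ (\sum_(y in Sstar) (F (x |: S) - F S))) //.
    apply: ler_sum => y _; have [yS|/x_best//] := boolP (y \in S).
    by rewrite gain_mem ?gain_ge0.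
  by rewrite sumr_const mulr_natl ler_wpMn2l ?gain_ge0.
have := setU_gain_le_sum S (enum Sstar); lra.
Qed.

Lemma greedy_from_gap (Sstar S : {set T}) (s : nat) (xs : seq T) :
  (0 < s)%N -> (#|Sstar| <= s)%N -> greedy_from F S xs ->
  F Sstar - F (S :|: [set y in xs]) <=
    (1 - s%:R^-1) ^+ size xs * (F Sstar - F S).
Proof.
move=> s_gt0 card_Sstar; elim: xs S => [|x xs IH] S /=.
  by rewrite expr0 mul1r (finset.setUidPl _) ?finset.sub0set.
move=> [x_step xs_greedy].
have -> : S :|: [set y in x :: xs] = (x |: S) :|: [set y in xs].
  by apply/setP => z; rewrite !inE orbCA orbA.
have s_pos : 0 < s%:R :> R by rewrite ltr0n.
have gap_shrinks : F Sstar - F (x |: S) <= (1 - s%:R^-1) * (F Sstar - F S).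
  have := @greedy_step_gain _ _ _ x card_Sstar x_step.
  rewrite -ler_pdivrMl // => gain_ge.
  have -> : (1 - s%:R^-1) * (F Sstar - F S) = F Sstar - F S - s%:R^-1 * (F Sstar - F S)
    by ring.
  lra.
rewrite (le_trans (IH _ xs_greedy)) // exprSr -mulrA ler_wpM2l ?exprn_ge0 //.
by rewrite subr_ge0 invf_le1 // ler1n.
Qed.

Lemma greedy_approx (Sstar : {set T}) (xs : seq T) :
  0 <= F finset.set0 -> (0 < size xs)%N -> (#|Sstar| <= size xs)%N ->
  greedy_from F finset.set0 xs ->
  (1 - expR (-1)) * F Sstar <= F [set x in xs].
Proof.
move=> F0_ge0 xs_gt0 card_Sstar xs_greedy.
have := @greedy_from_gap _ _ _ _ xs_gt0 card_Sstar xs_greedy; rewrite finset.set0U.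
have gap_ge0 : 0 <= F Sstar - F finset.set0.
  by rewrite subr_ge0 F_mono ?finset.sub0set.
have := ler_wpM2r gap_ge0 (@one_subVn_expn_le_expRN1 R _ xs_gt0).
have := expR_ge0 (-1 : R); nra.
Qed.

End MonotoneSubmodular.

Section ConcaveOverModular.
Context {R : realType} {T : finType}.
Variables (sigma : R -> R) (c : T -> T -> R).
Hypothesis c_ge0 : forall i j, 0 <= c i j.
Hypothesis sigma_mono : nondecr_nonneg sigma.
Hypothesis sigma_conc : concave_nonneg sigma.
Hypothesis sigma0 : sigma 0 = 0.

Definition concave_cover (A : {set T}) : R :=
  \sum_(i : T) sigma (\sum_(j in A) c i j).

Lemma weight_ge0 i (A : {set T}) : 0 <= \sum_(j in A) c i j.
Proof. exact: sumr_ge0. Qed.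

Lemma weight_subset i (A B : {set T}) : A \subset B ->
  \sum_(j in A) c i j <= \sum_(j in B) c i j.
Proof.
move=> AB; rewrite [leRHS](big_setID A) (finset.setIidPr AB) /= lerDl.
exact: weight_ge0.
Qed.

Lemma concave_cover0 : concave_cover finset.set0 = 0.
Proof. by rewrite /concave_cover big1 // => i _; rewrite big_set0. Qed.

Lemma concave_cover_mono (A B : {set T}) : A \subset B ->
  concave_cover A <= concave_cover B.
Proof.
move=> AB; apply: ler_sum => i _.
by rewrite sigma_mono ?weight_ge0 ?weight_subset.
Qed.

Lemma concave_cover_submod (A B : {set T}) x : A \subset B -> x \notin B ->
  concave_cover (x |: B) - concave_cover B <=
    concave_cover (x |: A) - concave_cover A.
Proof.
move=> AB xB; have xA : x \notin A by apply: contra xB; exact: fintype.subsetP.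
rewrite -!sumrB; apply: ler_sum => i _.
rewrite (big_setU1 _ xB) (big_setU1 _ xA) /= ![c i x + _]addrC.
by rewrite concave_increment_nonincr ?weight_ge0 ?weight_subset.
Qed.

End ConcaveOverModular.

Theorem theorem4 (R : realType) (T : finType)
  (sim : T -> T -> R) (C : T -> R) (tau : R) (sigma : R -> R) (s : nat)
  (HC : forall x, 0 <= C x) (Htau : 0 <= tau)
  (Hmono : nondecr_nonneg sigma) (Hconc : concave_nonneg sigma)
  (Hsig0 : sigma 0 = 0)
  (Hs : (1 <= s)%N) (HsT : (s <= #|T|)%N)
  (Sstar : {set T}) (HSstar_card : (#|Sstar| <= s)%N)
  (HSstar_opt : forall S' : {set T}, (#|S'| <= s)%N ->
      OBJ sim C tau sigma S' <= OBJ sim C tau sigma Sstar)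
  (xs : seq T) (Hxs_size : size xs = s)
  (Hgreedy : greedy_from (OBJ sim C tau sigma) finset.set0 xs) :
  OBJ sim C tau sigma [set x in xs]%SET >=
    (1 - 1 / expR 1) * OBJ sim C tau sigma Sstar.
Proof.
pose c i j := (if tau <= sim i j then 1 else 0) * sim i j * C j.
have c_ge0 i j : 0 <= c i j.
  rewrite /c; case: ifP => [tau_le|_]; last by rewrite !mul0r.
  by rewrite mul1r mulr_ge0 // (le_trans Htau tau_le).
have OBJE : OBJ sim C tau sigma = concave_cover sigma c by [].
rewrite OBJE in Hgreedy *; rewrite div1r -expRN.
subst s; apply: greedy_approx Hgreedy => //.
- exact: concave_cover_mono.
- exact: concave_cover_submod.
- by rewrite concave_cover0.
Qed.
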